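(* In the setup described in the context, there exist polynomials $q_{kl}\in K[X]=K[X_{ij}\mid(i,j)\in N_0]$, for $1\le k\le v$ and $1\le l\le d$, depending only on the chosen ordered basis $B$ of $\mathbf P$, with the following property: for every $C\in\mathrm{GRASS}(\sigma)$ with coordinates $(c_{ij})_{(i,j)\in N_0}$, the point of $\mathbb P(\Lambda^a\mathbf P)$ corresponding (via Plücker) to $C$ is represented by $\mathbf c=C'_1\wedge\cdots\wedge C'_u\wedge C''_1\wedge\cdots\wedge C''_v\in\Lambda^a\mathbf P$, where $C'_i=b'_i-\sum_{1\le j\le d,\,(i,j)\in N_0}c_{ij}b_j$ for $1\le i\le u$ and $C''_k=b''_k-\sum_{l=1}^dq_{kl}(c_{ij})\,b_l$ for $1\le k\le v$. In particular, the coefficient of $\mathbf c$ on the basis vector $b'_1\wedge\cdots\wedge b'_u\wedge b''_1\wedge\cdots\wedge b''_v$ equals $1$.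
   Context: $K$ algebraically closed, $A=KQ/I$ basic finite-dimensional, $Q$ a finite quiver with vertices $e_1,\dots,e_n$, $J$ the Jacobson radical, $L+1$ the Loewy length; paths compose right to left. For $\mathbf d=(d_1,\dots,d_n)$, $d=\sum d_i$, $\mathbf P=\bigoplus_{r=1}^dAz_r$ is a projective cover of $\bigoplus_iS_i^{d_i}$ with top elements $z_r$ normed by vertices $e(r)$, $\widehat{\mathbf P}=\bigoplus_rKQz_r$, $a=\dim\mathbf P-d$; $\operatorname{Gr}(a,\mathbf P)\subseteq\mathbb P(\Lambda^a\mathbf P)$ via Plücker. A skeleton in $\widehat{\mathbf P}$ with radical layering $\mathbb S=(\mathbb S_0,\dots,\mathbb S_L)$, $\mathbb S_l=\bigoplus_iS_i^{m(l,i)}$, is a set $\sigma$ of paths $pz_r$ of length $\le L$ with exactly $m(l,i)$ paths of length $l$ ending in $e_i$, closed under initial subpaths. $\mathrm{GRASS}(\sigma)$ is the set of $A$-submodules $C\subseteq\mathbf P$ with $\underline{\dim}(\mathbf P/C)=\mathbf d$, radical layering of $\mathbf P/C$ equal to $\mathbb S$, such that the images of the paths of $\sigma$ form a basis of $\mathbf P/C$; assume $\mathrm{GRASS}(\sigma)\neq\varnothing$, so that $\sigma$ is identified with a linearly independent subset $\{b_1,\dots,b_d\}$ of $\mathbf P$. A path $b'$ in $\widehat{\mathbf P}$ of length $\le L$ is $\sigma$-critical if $b'\notin\sigma$ but every proper initial subpath of $b'$ lies in $\sigma$ (in particular $z_r\notin\sigma$ is $\sigma$-critical). For such $b'$, $\sigma(b')=\{b\in\sigma:\operatorname{length}(b)\ge\operatorname{length}(b'),\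 \operatorname{end}(b)=\operatorname{end}(b')\}$. Choose $\sigma$-critical paths $b'_1,\dots,b'_u$ whose images in $\mathbf P$ induce a basis of $(\sum_{b'\ \sigma\text{-critical}}Kb'+\sum_jKb_j)/\sum_jKb_j$, and paths $b''_1,\dots,b''_v$ in $\mathbf P$ such that $B=(b_1,\dots,b_d,b'_1,\dots,b'_u,b''_1,\dots,b''_v)=(w_1,\dots,w_{\dim\mathbf P})$ is an ordered basis of $\mathbf P$ (so $u+v=a$). Let $N_0=\{(i,j)\in\{1,\dots,u\}\times\{1,\dots,d\}: b_j\in\sigma(b'_i)\}$. Every $C\in\mathrm{GRASS}(\sigma)$ can be written uniquely as $C=\sum_{i=1}^uA\,(b'_i-\sum_{(i,j)\in N_0}c_{ij}b_j)$ with $c_{ij}\in K$, and $C\mapsto(c_{ij})$ is an isomorphism of $\mathrm{GRASS}(\sigma)$ onto a closed subvariety of $\mathbb A^{N_0}$; $(c_{ij})$ are called the coordinates of $C$. *)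

From HB Require Import structures.
From mathcomp Require Import all_boot all_order all_algebra.
From mathcomp Require Import falgebra.
Set Implicit Arguments. Unset Strict Implicit. Unset Printing Implicit Defensive.
Import GRing.Theory.
Local Open Scope ring_scope.

(* Polynomials in finitely many commuting variables indexed by X, given    *)
(* as polynomial expressions (every polynomial of K[X] is represented by   *)
(* such an expression and conversely).                                     *)
Inductive polyexpr (R : Type) (X : Type) : Type :=
  | PConst of R
  | PVar of X
  | PAdd of polyexpr R X & polyexpr R X
  | PMul of polyexpr R X & polyexpr R X.

Fixpoint peval (R : ringType) (X : Type) (f : X -> R) (p : polyexpr R X) : R :=
  match p with
  | PConst c => c
  | PVar x => f x
  | PAdd p q => peval f p + peval f q
  | PMul p q => peval f p * peval f q
  end.

Fixpoint pvars (R X : Type) (p : polyexpr R X) : seq X :=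
  match p with
  | PConst _ => [::]
  | PVar x => [:: x]
  | PAdd p q => pvars p ++ pvars q
  | PMul p q => pvars p ++ pvars q
  end.

Section Setting.
Variable K : fieldType.
Variable A : falgType K.
(* quiver Q: vertices 'I_n, arrows Arr with source / target *)
Variable n : nat.
Variable Arr : finType.
Variables (src tgt : Arr -> 'I_n).
(* images in A of the vertices e_i and of the arrows *)
Variable ev : 'I_n -> A.
Variable av : Arr -> A.

(* A path of Q is a starting vertex and the list of its arrows in the order
   in which they are traversed (so the path alpha_k ... alpha_1, composed
   right to left, is the list [:: alpha_1; ...; alpha_k]). *)
Fixpoint composable (v : 'I_n) (p : seq Arr) : bool :=
  if p is a :: p' then (src a == v) && composable (tgt a) p' else true.

Definition wordval (v : 'I_n) (p : seq Arr) : A :=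
  foldl (fun x a => av a * x) (ev v) p.

(* (ev, av) presents A as KQ/I with I admissible: the quiver relations hold
   (so paths induce an algebra map KQ -> A), this map is onto, its kernel I
   is contained in the ideal of paths of length >= 2 and contains all paths
   of length >= m for some m. *)
Definition is_KQ_mod_admissible : Prop :=
  [/\ [/\ (forall i j : 'I_n, ev i * ev j = (if i == j then ev i else 0)),
          \sum_(i < n) ev i = 1 &
          (forall a : Arr, ev (tgt a) * av a = av a /\ av a * ev (src a) = av a)],
      (forall x : A, exists s : seq ('I_n * seq Arr),
          all (fun w => composable w.1 w.2) s /\
          x \in span (map (fun w => wordval w.1 w.2) s)),
      (forall (s : seq ('I_n * seq Arr)) (lam : 'I_n * seq Arr -> K),
          uniq s -> all (fun w => composable w.1 w.2) s ->
          \sum_(w <- s) lam w *: wordval w.1 w.2 = 0 ->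
          forall w, w \in s -> (size w.2 <= 1)%N -> lam w = 0)
    & (exists m : nat, forall (v : 'I_n) (p : seq Arr),
          composable v p -> (m <= size p)%N -> wordval v p = 0)].

Definition radA (W : {vspace A}) : {vspace A} :=
  (\sum_(a : Arr) (amull (av a) @: W))%VS.
Definition JpowA (l : nat) : {vspace A} := iter l radA fullv.

Definition loewy_length_succ (L : nat) : Prop :=
  JpowA L.+1 = 0%VS /\ JpowA L != 0%VS.

(* The projective module P = (+)_{r<d} A z_r, with z_r = e_{e r} in slot r,
   realised inside V = A^d. *)
Variable d : nat.
Variable e : 'I_d -> 'I_n.

Definition V := {ffun 'I_d -> A}.

Definition actV (a : A) (x : V) : V := [ffun r => a * x r].
Definition actE (a : A) : 'End(V) := linfun (actV a).

Definition cyc (x : V) : {vspace V} := limg (linfun (fun a : A => actV a x)).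

Definition zvec (r : 'I_d) : V := [ffun r' => if r' == r then ev (e r) else 0].

Definition Pspace : {vspace V} := (\sum_(r < d) cyc (zvec r))%VS.

Definition dvec (i : 'I_n) : nat := #|[pred r | e r == i]|.

Definition radP (W : {vspace V}) : {vspace V} :=
  (\sum_(a : Arr) (actE (av a) @: W))%VS.
Definition JP (l : nat) : {vspace V} := iter l radP Pspace.

Definition emul (i : 'I_n) (W : {vspace V}) : {vspace V} := (actE (ev i) @: W)%VS.

(* paths in \hat P : p z_r, given as (r, arrows of p) *)
Definition HPath := ('I_d * seq Arr)%type.
Definition hvalid (q : HPath) : bool := composable (e q.1) q.2.
Definition hlen (q : HPath) : nat := size q.2.
Definition hend (q : HPath) : 'I_n := last (e q.1) [seq tgt a | a <- q.2].
Definition img (q : HPath) : V :=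
  [ffun r' => if r' == q.1 then wordval (e q.1) q.2 else 0].

Variable L : nat.
Variable sig : 'I_d -> HPath.

Definition sigset : seq HPath := [seq sig j | j <- enum 'I_d].

Definition is_skeleton : Prop :=
  [/\ injective sig,
      (forall j, hvalid (sig j) && (hlen (sig j) <= L)%N)
    & forall j k, (k <= hlen (sig j))%N -> ((sig j).1, take k (sig j).2) \in sigset].

Definition mcount (l : nat) (i : 'I_n) : nat :=
  #|[pred j | (hlen (sig j) == l) && (hend (sig j) == i)]|.

Definition sigimgs : seq V := [seq img (sig j) | j <- enum 'I_d].

Definition inGRASS (C : {vspace V}) : Prop :=
  [/\ (C <= Pspace)%VS,
      (forall (a : A) (x : V), x \in C -> actV a x \in C),
      (* dimension vector of P/C is d : dim e_i (P/C) = d_i *)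
      (forall i, (\dim (emul i Pspace + C) - \dim C)%N = dvec i),
      (* radical layering of P/C is S : dim e_i (J^l M / J^(l+1) M) = m(l,i) *)
      (forall l i, (l <= L)%N ->
        (\dim (emul i (JP l) + C) - \dim (emul i (JP l.+1) + C))%N = mcount l i)
    & (* the images of sigma form a basis of P/C *)
      [/\ free sigimgs, (<<sigimgs>> + C)%VS = Pspace & (<<sigimgs>> :&: C)%VS = 0%VS]].

Definition critical (q : HPath) : bool :=
  [&& hvalid q, (hlen q <= L)%N, q \notin sigset &
      [forall k : 'I_(hlen q), (q.1, take k q.2) \in sigset]].

(* N_0 : b_j in sigma(b'_i) *)
Definition N0rel (crit : HPath) (j : 'I_d) : bool :=
  (hlen crit <= hlen (sig j))%N && (hend (sig j) == hend crit).

End Setting.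

(* Call x in P reducible if there are polynomials f_l in the variables X_ij,
   (i,j) in N_0, such that x - sum_l f_l(c) b_l lies in every A-submodule C
   containing the relations C'_i = b'_i - sum_j c_ij b_j.  Reducible vectors
   form a subspace containing the paths of sigma and the sigma-critical paths.
   An arrow applied to a path of sigma gives a path of sigma, zero (the path is
   not composable or has length L+1) or a sigma-critical path, so this subspace
   is stable under the arrows; hence every path is reducible, and reducing the
   b''_k yields the q_kl.  The resulting vectors C'_i, C''_k lie in C and their
   coordinates on b'_1, ..., b''_v form the identity matrix, so they are free,
   and there are a = dim C of them. *)

From HB Require Import structures.
From mathcomp Require Import all_boot all_order all_algebra.
From mathcomp Require Import falgebra.

Set Implicit Arguments. Unset Strict Implicit.
Import GRing.Theory.
Local Open Scope ring_scope.

Lemma peval_sum (R : nzRingType) (X : Type) (c : X -> R) (I : finType)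
    (F : I -> polyexpr R X) :
  peval c (\big[@PAdd R X/PConst _ 0]_(i : I) F i) = \sum_(i : I) peval c (F i).
Proof. by rewrite (big_morph (peval c) (id1 := 0) (op1 := +%R)). Qed.

Lemma pvars_sum (R X : Type) (P : pred X) (z : R) (I : finType)
    (F : I -> polyexpr R X) :
  (forall i, all P (pvars (F i))) ->
  all P (pvars (\big[@PAdd R X/PConst _ z]_(i : I) F i)).
Proof. by move=> PF; elim/big_ind: _ => //= p q Pp Pq; rewrite all_cat Pp Pq. Qed.

Section PolynomialReduction.

Variables (K : fieldType) (W : vectType K) (X : Type) (N : pred X).
Variables (m : nat) (b : 'I_m -> W).
Variable admissible : {vspace W} -> (X -> K) -> Prop.

Definition poly_reducible (x : W) : Prop :=
  exists f : 'I_m -> polyexpr K X, (forall l, all N (pvars (f l))) /\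
    forall C c, admissible C c -> x - \sum_l peval c (f l) *: b l \in C.

Lemma poly_reducible0 : poly_reducible 0.
Proof.
exists (fun=> PConst _ 0); split=> // C c _.
by rewrite big1 ?subr0 ?mem0v // => l _; rewrite scale0r.
Qed.

Lemma poly_reducibleD x y :
  poly_reducible x -> poly_reducible y -> poly_reducible (x + y).
Proof.
move=> [f [Nf Cf]] [g [Ng Cg]].
exists (fun l => PAdd (f l) (g l)); split=> [l|C c Cc]; first by rewrite /= all_cat Nf Ng.
rewrite (eq_bigr (fun l => peval c (f l) *: b l + peval c (g l) *: b l)) => [|l _];
  last by rewrite scalerDl.
by rewrite big_split opprD addrACA memvD ?Cf ?Cg.
Qed.

Lemma poly_reducibleZ k x : poly_reducible x -> poly_reducible (k *: x).
Proof.
move=> [f [Nf Cf]].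
exists (fun l => PMul (PConst _ k) (f l)); split=> [l|C c Cc]; first exact: Nf.
rewrite (eq_bigr (fun l => k *: (peval c (f l) *: b l))) => [|l _]; last by rewrite scalerA.
by rewrite -scaler_sumr -scalerBr memvZ ?Cf.
Qed.

Lemma poly_reducible_sum (I : finType) (F : I -> W) :
  (forall i, poly_reducible (F i)) -> poly_reducible (\sum_i F i).
Proof.
by move=> RF; elim/big_ind: _ => //; [exact: poly_reducible0 | exact: poly_reducibleD].
Qed.

Lemma poly_reducible_span (s : seq W) x :
  {in s, forall y, poly_reducible y} -> x \in <<s>>%VS -> poly_reducible x.
Proof.
move=> Rs /(coord_span (X := in_tuple s)) ->; apply: poly_reducible_sum => i.
by apply: poly_reducibleZ; apply: Rs; apply: mem_nth.
Qed.

Lemma poly_reducible_base l : poly_reducible (b l).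
Proof.
exists (fun l' => PConst _ (l' == l)%:R); split=> // C c _.
rewrite (bigD1 l) //= eqxx scale1r big1 ?addr0 ?subrr ?mem0v // => l' /negbTE ->.
by rewrite scale0r.
Qed.

Lemma poly_reducible_linear (phi : {linear W -> W}) :
  (forall C c y, admissible C c -> y \in C -> phi y \in C) ->
  (forall l, poly_reducible (phi (b l))) ->
  forall x, poly_reducible x -> poly_reducible (phi x).
Proof.
move=> phiC /fin_all_exists[g Rg] x [f [Nf Cf]].
exists (fun k => \big[@PAdd _ _/PConst _ 0]_l PMul (f l) (g l k)); split=> [k|C c Cc].
  by apply: pvars_sum => l; rewrite /= all_cat Nf (proj1 (Rg l)).
have -> : \sum_k peval c (\big[@PAdd _ _/PConst _ 0]_l PMul (f l) (g l k)) *: b k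
    = \sum_l peval c (f l) *: \sum_k peval c (g l k) *: b k.
  under eq_bigr => k _ do rewrite peval_sum scaler_suml.
  rewrite exchange_big; apply: eq_bigr => l _; rewrite scaler_sumr.
  by apply: eq_bigr => k _; rewrite scalerA.
have -> : phi x - \sum_l peval c (f l) *: \sum_k peval c (g l k) *: b k
    = phi (x - \sum_l peval c (f l) *: b l)
      + \sum_l peval c (f l) *: (phi (b l) - \sum_k peval c (g l k) *: b k).
  rewrite linearB [in RHS]linear_sum -addrA -!sumrN -big_split /=.
  by congr (_ + _); apply: eq_bigr => l _; rewrite [phi (_ *: _)]linearZ scalerBr addKr.
rewrite memvD ?(phiC C c) ?Cf //.
by apply: memv_suml => l _; rewrite memvZ ?(proj2 (Rg l)).
Qed.

End PolynomialReduction.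

Section PathImages.

Variables (K : fieldType) (A : falgType K) (n : nat) (Arr : finType).
Variables (src tgt : Arr -> 'I_n) (ev : 'I_n -> A) (av : Arr -> A).

Lemma wordval_rcons v p a : wordval ev av v (rcons p a) = av a * wordval ev av v p.
Proof. by rewrite /wordval -cats1 foldl_cat. Qed.

Lemma composable_rcons v p a :
  composable src tgt v (rcons p a) =
  composable src tgt v p && (src a == last v [seq tgt b | b <- p]).
Proof. by elim: p v => [|b p IHp] v /=; rewrite ?andbT // IHp andbA. Qed.

Lemma wordval_JpowA v p : wordval ev av v p \in JpowA av (size p).
Proof.
elim/last_ind: p => [|p a IHp]; first exact: memvf.
rewrite size_rcons wordval_rcons /JpowA iterS -/(JpowA av (size p)).
rewrite memvE (sumv_sup a) // -memvE.
by rewrite (_ : _ * _ = amull (av a) (wordval ev av v p)) ?memv_img ?lfunE.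
Qed.

Hypothesis ev_mul : forall i j, ev i * ev j = if i == j then ev i else 0.
Hypothesis ev_tgt : forall a, ev (tgt a) * av a = av a.
Hypothesis ev_src : forall a, av a * ev (src a) = av a.

Lemma ev_last_wordval v p :
  ev (last v [seq tgt a | a <- p]) * wordval ev av v p = wordval ev av v p.
Proof.
case/lastP: p => [|p a]; first by rewrite /wordval /= ev_mul eqxx.
by rewrite map_rcons last_rcons wordval_rcons mulrA ev_tgt.
Qed.

Lemma wordval_eq0 v p : ~~ composable src tgt v p -> wordval ev av v p = 0.
Proof.
elim/last_ind: p => [|p a IHp] //.
rewrite composable_rcons negb_and wordval_rcons => /orP[/IHp -> | srcN].
  by rewrite mulr0.
by rewrite -ev_src -ev_last_wordval mulrA -(mulrA (av a)) ev_mul (negbTE srcN) mulr0 mul0r.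
Qed.

End PathImages.

Section ModuleAction.

Variables (K : fieldType) (A : falgType K) (d : nat).

Lemma actV_is_linear (a : A) : linear (@actV K A d a).
Proof. by move=> k x y; apply/ffunP => r; rewrite !ffunE mulrDr scalerAr. Qed.
HB.instance Definition _ (a : A) :=
  GRing.isLinear.Build K (V A d) (V A d) *:%R (actV a) (actV_is_linear a).

Definition act_on (x : V A d) (a : A) : V A d := actV a x.

Lemma act_on_is_linear (x : V A d) : linear (act_on x).
Proof. by move=> k a b; apply/ffunP => r; rewrite !ffunE mulrDl scalerAl. Qed.
HB.instance Definition _ (x : V A d) :=
  GRing.isLinear.Build K A (V A d) *:%R (act_on x) (act_on_is_linear x).

Lemma mem_cyc (x : V A d) : x \in cyc x.
Proof.
have x1 : x = linfun (act_on x) 1 by rewrite lfunE; apply/ffunP => r; rewrite ffunE mul1r.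
rewrite {1}x1; exact: memv_img (memvf 1).
Qed.

Variables (n : nat) (Arr : finType) (ev : 'I_n -> A) (av : Arr -> A) (e : 'I_d -> 'I_n).

Lemma img_rcons r p a : img ev av e (r, rcons p a) = actV (av a) (img ev av e (r, p)).
Proof.
apply/ffunP => r'; rewrite !ffunE /=.
by case: ifP => _; rewrite ?mulr0 ?wordval_rcons.
Qed.

Lemma img_eq0 q : wordval ev av (e q.1) q.2 = 0 -> img ev av e q = 0.
Proof. by move=> q0; apply/ffunP => r; rewrite !ffunE q0 if_same. Qed.

End ModuleAction.

Section Skeleton.

Variables (K : fieldType) (A : falgType K) (n : nat) (Arr : finType).
Variables (src tgt : Arr -> 'I_n) (ev : 'I_n -> A) (av : Arr -> A).
Variables (d : nat) (e : 'I_d -> 'I_n) (L : nat) (sig : 'I_d -> HPath Arr d).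
Variables (u : nat) (crit : 'I_u -> HPath Arr d).

Hypothesis ev_mul : forall i j, ev i * ev j = if i == j then ev i else 0.
Hypothesis ev_tgt : forall a, ev (tgt a) * av a = av a.
Hypothesis ev_src : forall a, av a * ev (src a) = av a.
Hypothesis loewy : JpowA av L.+1 = 0%VS.
Hypothesis skeleton : is_skeleton src tgt e L sig.

Local Notation img := (img ev av e).
Local Notation sigcrit_imgs :=
  (sigimgs ev av e sig ++ [seq img (crit i) | i <- enum 'I_u]).

Hypothesis critical_in_span :
  forall q, critical src tgt e L sig q -> img q \in <<sigcrit_imgs>>%VS.

Lemma sigset_img_in_span q : q \in sigset sig -> img q \in <<sigcrit_imgs>>%VS.
Proof.
case/mapP=> j _ ->; apply/memv_span; rewrite mem_cat.
by rewrite (map_f (fun j => img (sig j))) ?mem_enum.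
Qed.

Lemma trivial_path_img_in_span r : img (r, [::]) \in <<sigcrit_imgs>>%VS.
Proof.
have [|notS] := boolP ((r, [::]) \in sigset sig); first exact: sigset_img_in_span.
by apply: critical_in_span; rewrite /critical notS; apply/forallP => -[].
Qed.

Lemma arrow_skeleton_img_in_span l a :
  actV (av a) (img (sig l)) \in <<sigcrit_imgs>>%VS.
Proof.
case: skeleton => _ sig_valid sig_prefix.
move: (sig_valid l) (sig_prefix l); case: (sig l) => r p /andP[valid lenL] prefix.
rewrite -img_rcons.
have [|notS] := boolP ((r, rcons p a) \in sigset sig); first exact: sigset_img_in_span.
have [comp|ncomp] := boolP (composable src tgt (e r) (rcons p a)); last first.
  by rewrite img_eq0 ?mem0v //= (wordval_eq0 ev_mul ev_tgt ev_src).
have [short|long] := ltnP (size p) L; last first.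
  have lenS : size (rcons p a) = L.+1.
    by rewrite size_rcons; congr _.+1; apply/eqP; rewrite eqn_leq lenL.
  rewrite img_eq0 ?mem0v //=; apply/eqP; rewrite -memv0 -loewy -lenS.
  exact: wordval_JpowA.
apply: critical_in_span; rewrite /critical /hvalid /hlen /= comp notS /=.
apply/andP; split; first by rewrite size_rcons.
apply/forallP => -[k]; rewrite /= size_rcons ltnS => le_kp.
by rewrite -cats1 takel_cat //; apply: prefix.
Qed.

Definition critical_relation (c : 'I_u * 'I_d -> K) (i : 'I_u) : V A d :=
  img (crit i) - \sum_(j < d | N0rel tgt e sig (crit i) j) c (i, j) *: img (sig j).

Definition contains_relations (C : {vspace V A d}) (c : 'I_u * 'I_d -> K) : Prop :=
  (forall a x, x \in C -> actV a x \in C) /\ forall i, critical_relation c i \in C.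

Local Notation reducible :=
  (poly_reducible (fun x => N0rel tgt e sig (crit x.1) x.2) (fun l => img (sig l))
     contains_relations).

Lemma critical_img_reducible i : reducible (img (crit i)).
Proof.
exists (fun l => if N0rel tgt e sig (crit i) l then PVar K (i, l) else PConst _ 0).
split=> [l|C c [_ relC]]; first by case: ifP => //= ->.
rewrite (eq_bigr (fun l => if N0rel tgt e sig (crit i) l then c (i, l) *: img (sig l)
                           else 0)) => [|l _]; last by case: ifP; rewrite //= scale0r.
by rewrite -big_mkcond; apply: relC.
Qed.

Lemma span_reducible x : x \in <<sigcrit_imgs>>%VS -> reducible x.
Proof.
apply: poly_reducible_span => y; rewrite mem_cat => /orP[] /mapP[i _ ->].
  exact: poly_reducible_base.
exact: critical_img_reducible.
Qed.

Lemma path_img_reducible q : reducible (img q).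
Proof.
case: q => r p; elim/last_ind: p => [|p a IHp].
  exact/span_reducible/trivial_path_img_in_span.
rewrite img_rcons; apply: (poly_reducible_linear (phi := actV (av a))) IHp.
  by move=> C c y [stableC _]; apply: stableC.
by move=> l; apply/span_reducible/arrow_skeleton_img_in_span.
Qed.

End Skeleton.

Section CoordinatesInBasis.

Variables (K : fieldType) (W : vectType K) (m k : nat) (B : (m + k).-tuple W).

Lemma coord_rshift_sub_comb (i j : 'I_k) (P : pred 'I_m) (a : 'I_m -> K) :
  free B ->
  coord B (rshift m j) (tnth B (rshift m i) - \sum_(l | P l) a l *: tnth B (lshift k l))
  = (i == j)%:R.
Proof.
move=> freeB; rewrite linearB linear_sum big1 => [|l _].
  by rewrite subr0 /= (tnth_nth 0) coord_free // eq_rshift.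
by rewrite linearZ /= (tnth_nth 0) coord_free // eq_lrshift mulr0.
Qed.

Lemma basis_of_coord_delta (C : {vspace W}) (w : 'I_k -> W) :
  (forall i, w i \in C) -> \dim C = k ->
  (forall i j, coord B (rshift m j) (w i) = (i == j)%:R) ->
  basis_of C [tuple w i | i < k].
Proof.
move=> wC dimC coord_w; rewrite basisEfree size_tuple dimC leqnn andbT.
apply/andP; split; last by apply/span_subvP => _ /mapP[i _ ->]; apply: wC.
apply/freeP => a sum0 i; have := congr1 (coord B (rshift m i)) sum0.
rewrite linear_sum linear0 (bigD1 i) //= big1 => [|j /negbTE neq_ji].
  by rewrite addr0 linearZ /= nth_mktuple coord_w eqxx mulr1.
by rewrite linearZ /= nth_mktuple coord_w neq_ji mulr0.
Qed.

End CoordinatesInBasis.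

Theorem lemma6p2
  (K : closedFieldType) (A : falgType K)
  (n : nat) (Arr : finType) (src tgt : Arr -> 'I_n)
  (ev : 'I_n -> A) (av : Arr -> A)
  (HA : is_KQ_mod_admissible src tgt ev av)
  (L : nat) (HL : loewy_length_succ av L)
  (d : nat) (e : 'I_d -> 'I_n)
  (sig : 'I_d -> HPath Arr d)
  (Hsig : is_skeleton src tgt e L sig)
  (Hne : exists C, inGRASS tgt ev av e L sig C)
  (u v : nat) (crit : 'I_u -> HPath Arr d) (xtra : 'I_v -> HPath Arr d)
  (Hcrit : forall i, critical src tgt e L sig (crit i))
  (Hcritbasis :
     free (sigimgs ev av e sig ++ [seq img ev av e (crit i) | i <- enum 'I_u]) /\
     (forall q, critical src tgt e L sig q ->
        img ev av e q \in
          span (sigimgs ev av e sig ++ [seq img ev av e (crit i) | i <- enum 'I_u])))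
  (Hxtra : forall k, hvalid src tgt e (xtra k))
  (HB : basis_of (Pspace ev e)
          (cat_tuple [tuple img ev av e (sig j) | j < d]
             (cat_tuple [tuple img ev av e (crit i) | i < u]
                        [tuple img ev av e (xtra k) | k < v]))) :
  exists q : 'I_v -> 'I_d -> polyexpr K ('I_u * 'I_d),
    (forall k l, all (fun x => N0rel tgt e sig (crit x.1) x.2) (pvars (q k l))) /\
    forall (C : {vspace V A d}) (c : 'I_u -> 'I_d -> K),
      inGRASS tgt ev av e L sig C ->
      C = (\sum_(i < u) cyc
             (img ev av e (crit i)
              - \sum_(j < d | N0rel tgt e sig (crit i) j) c i j *: img ev av e (sig j)))%VS ->
      let C' := fun i : 'I_u =>
        img ev av e (crit i)
        - \sum_(j < d | N0rel tgt e sig (crit i) j) c i j *: img ev av e (sig j) in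
      let C'' := fun k : 'I_v =>
        img ev av e (xtra k)
        - \sum_(l < d) peval (fun x => c x.1 x.2) (q k l) *: img ev av e (sig l) in
      let Cvec := fun i : 'I_(u + v) =>
        match split i with inl i' => C' i' | inr k => C'' k end in
      let B := cat_tuple [tuple img ev av e (sig j) | j < d]
                 (cat_tuple [tuple img ev av e (crit i) | i < u]
                            [tuple img ev av e (xtra k) | k < v]) in
      basis_of C [tuple Cvec i | i < u + v] /\
      \det (\matrix_(i < u + v, j < u + v) coord B (rshift d j) (Cvec i)) = 1.
Proof.
case: HA => [[ev_mul _ ev_arrow] _ _ _]; case: HL => loewy _.
have ev_tgt a : ev (tgt a) * av a = av a by case: (ev_arrow a).
have ev_src a : av a * ev (src a) = av a by case: (ev_arrow a).
have [q reduced_xtra] := fin_all_exists (fun k =>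
  path_img_reducible ev_mul ev_tgt ev_src loewy Hsig Hcritbasis.2 (xtra k)).
exists q; split=> [k l | C c GRASS_C defC C' C'' Cvec B]; first exact: (reduced_xtra k).1.
have relC : contains_relations tgt ev av e sig crit C (fun x => c x.1 x.2).
  case: GRASS_C => _ stableC _ _ _; split=> // i.
  by rewrite defC memvE (sumv_sup i) // -memvE; apply: mem_cyc.
have Bsig l : img ev av e (sig l) = tnth B (lshift (u + v) l).
  by rewrite tnth_lshift tnth_mktuple.
have Bcrit i : img ev av e (crit i) = tnth B (rshift d (lshift v i)).
  by rewrite tnth_rshift tnth_lshift tnth_mktuple.
have Bxtra k : img ev av e (xtra k) = tnth B (rshift d (rshift u k)).
  by rewrite !tnth_rshift tnth_mktuple.
have coordC i j : coord B (rshift d j) (Cvec i) = (i == j)%:R.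
  rewrite /Cvec /C' /C''; case: split_ordP => [i' ->|k ->];
    under eq_bigr do rewrite Bsig.
    by rewrite Bcrit coord_rshift_sub_comb ?(basis_free HB).
  by rewrite Bxtra coord_rshift_sub_comb ?(basis_free HB).
have dimC : \dim C = (u + v)%N.
  case: GRASS_C => _ _ _ _ [free_sig sumP capP].
  move: (dimv_disjoint_sum capP); rewrite sumP (size_basis HB) (eqnP free_sig).
  by rewrite size_map size_enum_ord => /eqP; rewrite eqn_add2l => /eqP.
split.
  apply: basis_of_coord_delta dimC coordC => i; rewrite /Cvec.
  by case: split => [i'|k]; [apply: relC.2 | apply: (reduced_xtra k).2].
have -> : \matrix_(i, j) coord B (rshift d j) (Cvec i) = 1%:M.
  by apply/matrixP => i j; rewrite !mxE coordC.
exact: det1.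
Qed.
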